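(* Let $n$ be a positive integer. (1) The graph obtained from two disjoint triangles $K_3$ by adding a perfect matching between them (the $i$-th vertex of one triangle joined to the $i$-th vertex of the other) is not a vertex-minor of $C_n$. (2) $C_7$ is not a vertex-minor of the graph obtained from two disjoint copies of $K_n$ by adding a perfect matching between them (the $i$-th vertex of one copy joined to the $i$-th vertex of the other).
   Context: All graphs are simple. A graph $H$ is a vertex-minor of $G$ if $H$ is an induced subgraph of a graph obtained from $G$ by a sequence of local complementations (local complementation at $v$ replaces the subgraph induced on the neighborhood of $v$ by its complement). $C_n$ is the cycle on $n$ vertices. *)

(* Simple graphs are symmetric irreflexive relations on a finType. *)
From mathcomp Require Import all_boot.
Unset Printing Implicit Defensive.

Definition local_comp (T : finType) (e : rel T) (v : T) : rel T :=
  fun x y => if [&& e v x, e v y & x != y] then ~~ e x y else e x y.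

Definition local_comps (T : finType) (e : rel T) (s : seq T) : rel T :=
  foldl (@local_comp T) e s.

Definition vertex_minor (U T : finType) (h : rel U) (g : rel T) : Prop :=
  exists (s : seq T) (f : U -> T),
    injective f /\ forall x y : U, h x y = @local_comps T g s (f x) (f y).

Definition cycle_graph (n : nat) : rel 'I_n :=
  fun i j => (i != j) &&
    ((val j == (val i).+1 %% n) || (val i == (val j).+1 %% n)).

Definition matched_cliques (n : nat) : rel (bool * 'I_n) :=
  fun x y => ((x.1 == y.1) && (x.2 != y.2)) || ((x.1 != y.1) && (x.2 == y.2)).

Definition prism : rel (bool * 'I_3) := matched_cliques 3.

From mathcomp Require Import all_boot all_algebra zify.
Set Implicit Arguments. Unset Strict Implicit.
Import GRing.Theory.

(* Local complementation at v adds row (or column) v of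
   the cut matrix between X and its complement to other rows (or columns), so
   it never increases the cut rank, and neither does passing to an induced
   subgraph.  A cut of C_n at an interval, and a cut of the matched cliques at
   a union of matched pairs, have rank at most 2.  But every split of the prism
   into three rows and three columns has a nonsingular 3x3 cut matrix, and an
   interval of the cycle contains exactly three prism vertices; and for every
   pairing of the vertices of C_7 (the pairs of vertices sent into one matched
   pair) there is such a nonsingular split whose columns avoid the pairs of
   its rows.  Both nonsingularity facts are checked by exhaustive search. *)

Arguments local_comp {T} e v.
Arguments local_comps {T} e s.
Arguments vertex_minor {U T} h g.

Definition ord_of (n i : nat) : option 'I_n :=
  (if i < n as b return (i < n = b -> option 'I_n) then fun h => Some (Ordinal h)
   else fun _ => None) erefl.

(* [enum 'I_n] does not reduce under [vm_compute] (it goes through the opaque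
   [idP]); [ord_list n] is a computable replacement. *)
Definition ord_list (n : nat) : seq 'I_n := pmap (ord_of n) (iota 0 n).

Lemma ord_ofK n : pcancel val (ord_of n).
Proof.
move=> i; rewrite /ord_of; move: (erefl (i < n)); rewrite {2 3}(ltn_ord i) => h.
by congr Some; apply: val_inj.
Qed.

Lemma ord_list_enum n : ord_list n = enum 'I_n.
Proof. by rewrite /ord_list -val_enum_ord map_pK //; apply: ord_ofK. Qed.

Section Extensions.
Variables (T : eqType) (dom : seq T).

(* Unlike [has], stops at the first witness under call-by-value evaluation. *)
Fixpoint has_lazy (a : pred T) (s : seq T) : bool :=
  if s is x :: s' then (if a x then true else has_lazy a s') else false.

Lemma has_lazyE a s : has_lazy a s = has a s.
Proof. by elim: s => //= x s ->; case: (a x). Qed.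

(* The [if]s, unlike [==>] or [&&], prune prefixes failing [P] under
   call-by-value evaluation. *)
Fixpoint all_extensions (P Q : pred (seq T)) (k : nat) (l : seq T) : bool :=
  if k is k'.+1 then
    all (fun x => if P (rcons l x) then all_extensions P Q k' (rcons l x) else true) dom
  else Q l.

Fixpoint has_extensions (P Q : pred (seq T)) (k : nat) (l : seq T) : bool :=
  if k is k'.+1 then
    has_lazy (fun x => if P (rcons l x) then has_extensions P Q k' (rcons l x) else false) dom
  else Q l.

Lemma all_extensionsP P Q k l s :
  all_extensions P Q k l -> size s = k -> {subset s <= dom} ->
  (forall i, 0 < i <= k -> P (l ++ take i s)) -> Q (l ++ s).
Proof.
elim: s k l => [|x s IH] [|k] l //=; first by rewrite cats0.
move=> /allP/(_ x) search [sk] sdom Ppre; rewrite -cat_rcons.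
have Px : P (rcons l x) by have := Ppre 1 isT; rewrite /= take0 cats1.
move: search; rewrite sdom ?mem_head // Px => /(_ isT) /IH; apply=> // [y ys|i ik].
  by apply: sdom; rewrite inE ys orbT.
by rewrite cat_rcons; apply: (Ppre i.+1); case/andP: ik.
Qed.

Lemma has_extensionsP P Q k l :
  has_extensions P Q k l -> exists s, size s = k /\ Q (l ++ s).
Proof.
elim: k l => [|k IH] l /=; first by exists [::]; rewrite cats0.
rewrite has_lazyE => /hasP [x _]; case: ifP => // _ /IH [s [sk Qs]].
by exists (x :: s); rewrite -cat_rcons /= sk.
Qed.

End Extensions.

Definition det3b (b : nat -> nat -> bool) : bool :=
  (b 0 0 && (b 1 1 && b 2 2 (+) b 1 2 && b 2 1))
  (+) (b 0 1 && (b 1 0 && b 2 2 (+) b 1 2 && b 2 0))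
  (+) (b 0 2 && (b 1 0 && b 2 1 (+) b 1 1 && b 2 0)).

Definition split_det (U : Type) (h : rel U) (u0 : U) (w : seq U) : bool :=
  det3b (fun k l => h (nth u0 w k) (nth u0 w (3 + l))).

Section Matrices.
Local Open Scope ring_scope.

Lemma det_mx22 (R : comNzRingType) (A : 'M[R]_2) :
  \det A = A 0 0 * A 1 1 - A 0 1 * A 1 0.
Proof.
rewrite (expand_det_row _ 0) !big_ord_recl big_ord0 /cofactor !det_mx11 !mxE /=.
rewrite addr0 expr0 expr1 !mul1r mulN1r mulrN.
by congr (A _ _ * A _ _ - A _ _ * A _ _); apply: val_inj.
Qed.

Lemma det_mx33 (R : comNzRingType) (A : 'M[R]_3) :
  \det A = A 0 0 * (A 1 1 * A 2 2 - A 1 2 * A 2 1)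
         - A 0 1 * (A 1 0 * A 2 2 - A 1 2 * A 2 0)
         + A 0 2 * (A 1 0 * A 2 1 - A 1 1 * A 2 0).
Proof.
rewrite (expand_det_row _ 0) !big_ord_recl big_ord0 /cofactor !det_mx22 !mxE /=.
rewrite /bump /= expr0 expr1 sqrrN expr1n !mul1r mulN1r addr0 addrA mulrN.
by congr (A _ _ * (A _ _ * A _ _ - A _ _ * A _ _) - A _ _ * (A _ _ * A _ _ - A _ _ * A _ _)
  + A _ _ * (A _ _ * A _ _ - A _ _ * A _ _)); apply: val_inj.
Qed.

Definition bool_F2 (b : bool) : 'F_2 := b%:R.

Lemma bool_F2_addb a b : bool_F2 (a (+) b) = bool_F2 a + bool_F2 b.
Proof. by case: a; case: b; apply/eqP. Qed.

Lemma bool_F2_andb a b : bool_F2 (a && b) = bool_F2 a * bool_F2 b.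
Proof. by case: a; case: b; apply/eqP. Qed.

Lemma det_bool_mx3 (b : nat -> nat -> bool) :
  \det (\matrix_(i, j) bool_F2 (b i j) : 'M['F_2]_3) = bool_F2 (det3b b).
Proof.
rewrite det_mx33 !mxE !(GRing.subr_pchar2 (pchar_Fp (isT : prime 2))).
by rewrite /det3b !(bool_F2_addb, bool_F2_andb).
Qed.

Lemma mxrank_mxsub (F : fieldType) m n m' n' (f : 'I_m' -> 'I_m) (g : 'I_n' -> 'I_n)
    (A : 'M[F]_(m, n)) :
  (\rank (mxsub f g A) <= \rank A)%N.
Proof.
have -> : mxsub f g A = (rowsub g (rowsub f A)^T)^T by apply/matrixP => i j; rewrite !mxE.
rewrite mxrank_tr rowsubE; apply: leq_trans (mxrankM_maxr _ _) _.
by rewrite mxrank_tr rowsubE; apply: mxrankM_maxr.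
Qed.

End Matrices.

Section CutRank.
Local Open Scope ring_scope.
Variable T : finType.
Implicit Types (e : rel T) (X : {set T}).

Definition cut_edge e X x y := [&& x \in X, y \notin X & e x y].

Definition cut_mx e X : 'M['F_2]_#|T| :=
  \matrix_(i, j) bool_F2 (cut_edge e X (enum_val i) (enum_val j)).

Definition cut_rank e X : nat := \rank (cut_mx e X).

Lemma local_comp_sym e v : symmetric e -> symmetric (local_comp e v).
Proof.
move=> esym x y; rewrite /local_comp (esym x y) (eq_sym x y).
by case: (e v x); case: (e v y).
Qed.

(* Local complementation at [v] adds row (or column) [v] of the cut matrix to
   the rows of the neighbours of [v] in [X] (or to the columns of its
   neighbours outside [X]). *)
Lemma cut_rank_local_comp e v X :
  symmetric e -> (cut_rank (local_comp e v) X <= cut_rank e X)%N.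
Proof.
move=> esym; have lcE x y : x \in X -> y \notin X ->
    local_comp e v x y = e x y (+) (e v x && e v y).
  move=> xX yX; have /negPf xy : x != y by apply: contraNneq yX => <-.
  by rewrite /local_comp xy !andbT; case: (e v x); case: (e v y); case: (e x y).
rewrite /cut_rank; case: (boolP (v \in X)) => vX.
- pose N : 'M['F_2]_#|T| := \matrix_(i, k)
     bool_F2 [&& enum_val i \in X, e v (enum_val i) & k == enum_rank v].
  suff -> : cut_mx (local_comp e v) X = (1%:M + N) *m cut_mx e X by apply: mxrankM_maxr.
  apply/matrixP => i j; rewrite mulmxDl mul1mx mxE [RHS]mxE [(N *m _) i j]mxE.
  rewrite (bigD1 (enum_rank v)) //= big1 ?addr0 => [|k /negPf nk]; last first.
    by rewrite !mxE nk !andbF mul0r.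
  rewrite !mxE enum_rankK eqxx !andbT -bool_F2_andb -bool_F2_addb /cut_edge vX.
  case xX: (enum_val i \in X); case yX: (enum_val j \in X); rewrite /= ?andbF //.
  by rewrite lcE ?xX ?yX.
- pose N : 'M['F_2]_#|T| := \matrix_(k, j)
     bool_F2 [&& k == enum_rank v, enum_val j \notin X & e v (enum_val j)].
  suff -> : cut_mx (local_comp e v) X = cut_mx e X *m (1%:M + N) by apply: mxrankM_maxl.
  apply/matrixP => i j; rewrite mulmxDr mulmx1 mxE [RHS]mxE [(_ *m N) i j]mxE.
  rewrite (bigD1 (enum_rank v)) //= big1 ?addr0 => [|k /negPf nk]; last first.
    by rewrite !mxE nk mulr0.
  rewrite !mxE enum_rankK eqxx -bool_F2_andb -bool_F2_addb /cut_edge vX (esym _ v).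
  case xX: (enum_val i \in X); case yX: (enum_val j \in X); rewrite /= ?andbF //.
  by rewrite lcE ?xX ?yX // andbC.
Qed.

Lemma cut_rank_local_comps e s X :
  symmetric e -> (cut_rank (local_comps e s) X <= cut_rank e X)%N.
Proof.
elim: s e => [|v s IH] e esym //=.
exact: leq_trans (IH _ (local_comp_sym v esym)) (cut_rank_local_comp v X esym).
Qed.

Lemma cut_rank_le2 e X x0 x1 :
  (forall x, [\/ cut_edge e X x =1 xpred0, cut_edge e X x =1 cut_edge e X x0
               | cut_edge e X x =1 cut_edge e X x1]) ->
  (cut_rank e X <= 2)%N.
Proof.
move=> rows; rewrite /cut_rank.
pose M := cut_mx e X; pose r k := row (enum_rank k) M.
have sub : (M <= r x0 + r x1)%MS.
  apply/row_subP => i.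
  have rowE y : cut_edge e X (enum_val i) =1 cut_edge e X y -> row i M = r y.
    by move=> ey; apply/rowP => j; rewrite !mxE enum_rankK ey.
  case: (rows (enum_val i)) => ey.
  - by rewrite (_ : row i M = 0) ?sub0mx //; apply/rowP => j; rewrite !mxE ey.
  - by rewrite (rowE x0) ?addsmxSl.
  - by rewrite (rowE x1) ?addsmxSr.
apply: leq_trans (mxrankS sub) (leq_trans (mxrank_adds_leqif _ _) _).
by rewrite -[2%N]/(1 + 1)%N leq_add // rank_leq_row.
Qed.

Lemma mxrank_cut_minor e X m k (r : 'I_m -> T) (c : 'I_k -> T) :
  (forall i, r i \in X) -> (forall j, c j \notin X) ->
  (\rank (\matrix_(i, j) bool_F2 (e (r i) (c j))) <= cut_rank e X)%N.
Proof.
move=> rX cX; rewrite /cut_rank.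
have -> : \matrix_(i, j) bool_F2 (e (r i) (c j))
          = mxsub (enum_rank \o r) (enum_rank \o c) (cut_mx e X).
  by apply/matrixP => i j; rewrite !mxE /= !enum_rankK /cut_edge rX cX.
exact: mxrank_mxsub.
Qed.

Lemma cut_rank_split (U : finType) (h : rel U) (g : rel T) s (f : U -> T) X u0 w :
  symmetric g -> (forall x y, h x y = local_comps g s (f x) (f y)) ->
  size w = 6 -> {in take 3 w, forall u, f u \in X} -> {in drop 3 w, forall u, f u \notin X} ->
  split_det h u0 w -> (3 <= cut_rank g X)%N.
Proof.
move=> gsym hf sw rowsX colsX dw.
pose M := \matrix_(i < 3, j < 3)
  bool_F2 (local_comps g s (f (nth u0 w i)) (f (nth u0 w (3 + j)%N))).
have rkM : \rank M = 3%N.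
  apply: mxrank_unit; rewrite unitmxE unitfE.
  have -> : M = \matrix_(i, j) bool_F2 (h (nth u0 w i) (nth u0 w (3 + j)%N)).
    by apply/matrixP => i j; rewrite !mxE hf.
  rewrite (det_bool_mx3 (fun k l => h (nth u0 w k) (nth u0 w (3 + l)%N))).
  by rewrite -/(split_det h u0 w) dw oner_eq0.
rewrite -rkM; apply: leq_trans (cut_rank_local_comps s X gsym).
apply: mxrank_cut_minor => i; [apply: rowsX | apply: colsX].
- by rewrite -(nth_take u0 (ltn_ord i)) mem_nth // size_take sw.
- by rewrite -nth_drop mem_nth // size_drop sw.
Qed.

End CutRank.

Lemma cycle_graph_sym n : symmetric (cycle_graph n).
Proof. by move=> x y; rewrite /cycle_graph eq_sym orbC. Qed.

Lemma cycle_prefix_cut_rank n c :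
  0 < c -> c <= n -> cut_rank (cycle_graph n) [set i : 'I_n | i < c] <= 2.
Proof.
move=> c0 cn; have n0 : 0 < n by apply: leq_trans cn.
have last_lt : c.-1 < n by rewrite prednK.
apply: (@cut_rank_le2 _ _ _ (Ordinal n0) (Ordinal last_lt)) => x.
case: (eqVneq (x : nat) 0) => [x0|x0].
  by apply: Or32 => y; congr cut_edge; apply: val_inj.
case: (eqVneq (x : nat) c.-1) => [x1|x1].
  by apply: Or33 => y; congr cut_edge; apply: val_inj.
apply: Or31; case: x x0 x1 => x xn /= x0 x1 [y yn]; rewrite /cut_edge !inE /cycle_graph /=.
apply/negbTE/negP => /and4P [xc yc _ /orP adj].
have xSn : x.+1 < n by lia.
rewrite (modn_small xSn) in adj; case: adj => /eqP adj.
  by rewrite adj in yc; lia.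
have [ySn|ySn] : y.+1 < n \/ y.+1 = n by lia.
  by rewrite (modn_small ySn) in adj; rewrite adj in xc; lia.
by rewrite ySn modnn in adj; rewrite adj in x0.
Qed.

Definition prism_vertices : seq (bool * 'I_3) :=
  [seq (b, i) | b <- [:: false; true], i <- ord_list 3].

Lemma mem_prism_vertices x : x \in prism_vertices.
Proof.
by case: x => b i; rewrite /prism_vertices ord_list_enum allpairs_f ?mem_enum //; case: b.
Qed.

Lemma prism_split_det w : uniq w -> size w = 6 -> split_det prism (false, ord0) w.
Proof.
have search : all_extensions prism_vertices uniq (split_det prism (false, ord0)) 6 [::].
  by vm_compute.
move=> uw sw; apply: (all_extensionsP search sw) => [x _ | i _].
  exact: mem_prism_vertices.
exact: take_uniq.
Qed.

Lemma discrete_ivt (k : nat -> nat) m N :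
  k 0 = 0 -> (forall c, k c.+1 <= (k c).+1) -> m <= k N -> exists2 c, c <= N & k c = m.
Proof.
move=> k0 kS; elim: N => [|N IH] mN.
  by exists 0 => //; apply/eqP; rewrite eqn_leq mN k0.
have [/IH [c cN kc]|ltNm] := leqP m (k N); first by exists c => //; apply: leqW.
by exists N.+1 => //; apply/eqP; rewrite eqn_leq mN andbT; apply: leq_trans (kS N) ltNm.
Qed.

Lemma exists_prefix_card (U : finType) n (f : U -> 'I_n) m :
  injective f -> m <= #|U| -> exists2 c, c <= n & #|[set u | f u < c]| = m.
Proof.
move=> finj mU; apply: discrete_ivt => [|c|].
- by apply/eqP; rewrite cards_eq0; apply/eqP/setP => u; rewrite !inE.
- have sub : [set u | f u < c.+1] \subset [set u | f u < c] :|: [set u | f u == c :> nat].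
    by apply/subsetP => u; rewrite !inE ltnS leq_eqVlt orbC.
  apply: leq_trans (subset_leq_card sub) (leq_trans (leq_card_setU _ _) _).
  rewrite -addn1 leq_add2l; apply/card_le1_eqP => u v; rewrite !inE => /eqP fu /eqP fv.
  by apply: finj; apply: val_inj; rewrite /= fu fv.
- by rewrite (_ : [set u | f u < n] = setT) ?cardsT //; apply/setP => u; rewrite !inE ltn_ord.
Qed.

Lemma prism_not_vertex_minor_cycle n : ~ vertex_minor prism (cycle_graph n).
Proof.
case=> s [f [finj hf]].
have [c cn cardY] : exists2 c, c <= n & #|[set u | f u < c]| = 3.
  by apply: exists_prefix_card; rewrite // card_prod card_bool card_ord.
have c0 : 0 < c.
  have /set0Pn [u] : [set u | f u < c] != set0 by rewrite -card_gt0 cardY.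
  by rewrite inE; apply: leq_ltn_trans.
set Y := [set u | f u < c] in cardY.
pose w := enum Y ++ enum (~: Y).
have sY : size (enum Y) = 3 by rewrite -cardE.
have sw : size w = 6.
  by rewrite size_cat -!cardE cardsC card_prod card_bool card_ord.
apply/negP: (cycle_prefix_cut_rank c0 cn); rewrite -ltnNge.
apply: (cut_rank_split (u0 := (false, ord0)) (@cycle_graph_sym n) hf sw).
- by move=> u; rewrite take_size_cat // mem_enum !inE.
- by move=> u; rewrite drop_size_cat // mem_enum !inE.
- by apply: prism_split_det; rewrite // cat_uniq !enum_uniq /= andbT;
    apply/hasPn => u; rewrite !mem_enum inE.
Qed.

Lemma matched_cliques_sym n : symmetric (matched_cliques n).
Proof. by move=> x y; rewrite /matched_cliques (eq_sym x.1) (eq_sym x.2). Qed.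

(* A vertex of a set of matched pairs is adjacent to a vertex outside it
   exactly when the two lie in the same clique: every row of the cut is the
   row of [(false, s0)] or of [(true, s0)]. *)
Lemma matched_cliques_cut_rank n (S : pred 'I_n) s0 :
  S s0 -> cut_rank (matched_cliques n) [set x | S x.2] <= 2.
Proof.
move=> Ss0; apply: (@cut_rank_le2 _ _ _ (false, s0) (true, s0)) => x.
have [Sx|NSx] := boolP (S x.2); last by apply: Or31 => y; rewrite /cut_edge inE (negPf NSx).
have sameE (x' y : bool * 'I_n) : S x'.2 -> ~~ S y.2 -> matched_cliques n x' y = (x'.1 == y.1).
  move=> Sx' NSy; have /negPf ne : x'.2 != y.2 by apply: contraNneq NSy => <-.
  by rewrite /matched_cliques ne andbT andbF orbF.
case: x Sx => [[] i] /= Si; [apply: Or33 | apply: Or32] => y;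
  rewrite /cut_edge !inE Si Ss0 /=; case: (boolP (S y.2)) => //= NSy;
  by rewrite !sameE.
Qed.

Lemma fiber_pairing (U : finType) (Y : eqType) (phi : U -> Y) :
  (forall a b c, phi a = phi b -> phi c = phi b -> a != b -> c != b -> a = c) ->
  exists p : U -> U, involutive p /\ forall u v, phi v = phi u -> v = u \/ v = p u.
Proof.
move=> fib2; pose p u := odflt u [pick v | (v != u) && (phi v == phi u)].
have pP u : (p u = u /\ forall v, v != u -> phi v != phi u)
            \/ (p u != u /\ phi (p u) = phi u).
  rewrite /p; case: pickP => [v /andP [vu /eqP fv]|none] /=; first by right.
  by left; split=> // v vu; move: (none v); rewrite vu => /negbT.
have pfib u v : phi v = phi u -> v = u \/ v = p u.
  move=> fvu; have [->|vu] := eqVneq v u; first by left.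
  right; case: (pP u) => [[_ none]|[pu fpu]].
    by move: (none v vu); rewrite fvu eqxx.
  exact: fib2 fvu fpu vu pu.
exists p; split=> // u; case: (pP u) => [[pu _]|[pu fpu]]; first by rewrite !pu.
case: (pfib (p u) u (esym fpu)) => // eq_u; move: pu; by rewrite -eq_u eqxx.
Qed.

Lemma injective_snd_fibers (U : finType) (I : eqType) (f : U -> bool * I) :
  injective f -> forall a b c : U, (f a).2 = (f b).2 -> (f c).2 = (f b).2 ->
  a != b -> c != b -> a = c.
Proof.
move=> finj a b c fab fcb ab cb.
have fab' : f a != f b by apply: contra_neq (finj a b) ab.
have fcb' : f c != f b by apply: contra_neq (finj c b) cb.
apply: finj; move: fab fcb fab' fcb'; case: (f a) => [a1 a2]; case: (f b) => [b1 b2].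
by case: (f c) => [c1 c2] /= -> ->; case: a1; case: b1; case: c1; rewrite ?eqxx.
Qed.

Definition list_fun n (l : seq 'I_n) (i : 'I_n) : 'I_n := nth i l i.

Definition partial_involution n (l : seq 'I_n) : bool :=
  all (fun i : 'I_n =>
    [&& i < size l & list_fun l i < size l] ==> (list_fun l (list_fun l i) == i))
    (ord_list n).

Definition separated_split n (p : 'I_n -> 'I_n) (w : seq 'I_n) : bool :=
  all (fun b => all (fun a => (b != a) && (b != p a)) (take 3 w)) (drop 3 w).

Definition increasing_split n (w : seq 'I_n) : bool :=
  sorted (fun a b : 'I_n => a < b) (take 3 w) && sorted (fun a b : 'I_n => a < b) (drop 3 w).

Lemma list_fun_map n (p : 'I_n -> 'I_n) : list_fun (map p (enum 'I_n)) =1 p.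
Proof. by move=> i; rewrite /list_fun (nth_map i) ?nth_ord_enum // size_enum_ord. Qed.

Lemma partial_involution_take n (p : 'I_n -> 'I_n) k :
  involutive p -> partial_involution (take k (map p (enum 'I_n))).
Proof.
move=> pK; set l := take k _.
have lE (j : 'I_n) : j < size l -> list_fun l j = p j.
  rewrite size_take_min ltn_min => /andP [jk _].
  by rewrite /list_fun nth_take //; apply: list_fun_map.
apply/allP => i _ /=; apply/implyP => /andP [il pil].
by rewrite (lE i il) in pil *; rewrite (lE _ pil) pK.
Qed.

Lemma eq_separated_split n (p q : 'I_n -> 'I_n) w :
  p =1 q -> separated_split p w = separated_split q w.
Proof. by move=> pq; apply: eq_all => b; apply: eq_all => a; rewrite pq. Qed.

Lemma cycle7_separated_split (p : 'I_7 -> 'I_7) : involutive p ->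
  exists w, size w = 6 /\ separated_split p w && split_det (cycle_graph 7) ord0 w.
Proof.
(* [increasing_split] only prunes the search. *)
have search : all_extensions (ord_list 7) (@partial_involution 7)
    (fun l => has_extensions (ord_list 7)
       (fun w => increasing_split w && separated_split (list_fun l) w)
       (fun w => separated_split (list_fun l) w && split_det (cycle_graph 7) ord0 w)
       6 [::]) 7 [::].
  by vm_compute.
move=> pK.
have sizeE : size (map p (enum 'I_7)) = 7 by rewrite size_map size_enum_ord.
have domE : {subset map p (enum 'I_7) <= ord_list 7}.
  by move=> j _; rewrite ord_list_enum mem_enum.
have /has_extensionsP [w [sw]] :=
  all_extensionsP search sizeE domE (fun i _ => partial_involution_take i pK).
by rewrite !cat0s (eq_separated_split _ (list_fun_map p)); exists w.
Qed.

Lemma cycle7_not_vertex_minor_matched_cliques n :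
  ~ vertex_minor (cycle_graph 7) (matched_cliques n).
Proof.
case=> s [f [finj hf]].
have [p [pK pfib]] := fiber_pairing (injective_snd_fibers finj).
have [w [sw /andP [sepw dw]]] := cycle7_separated_split pK.
pose S i := has (fun a => (f a).2 == i) (take 3 w).
have S0 : S (f (nth ord0 w 0)).2.
  apply/hasP; exists (nth ord0 w 0) => //.
  by rewrite -(nth_take _ (isT : 0 < 3)) mem_nth // size_take sw.
apply/negP: (matched_cliques_cut_rank S0); rewrite -ltnNge.
apply: (cut_rank_split (u0 := ord0) (@matched_cliques_sym n) hf sw _ _ dw) => u ru.
  by rewrite inE; apply/hasP; exists u.
rewrite inE; apply/hasPn => a ra; apply/negP => /eqP fau.
have /allP /(_ a ra) /andP [ua upa] := allP sepw u ru.
by case: (pfib a u (esym fau)) => eq_u; rewrite eq_u eqxx in ua upa.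
Qed.

Theorem proposition8p1 (n : nat) (hn : 0 < n) :
  ~ @vertex_minor _ _ prism (cycle_graph n) /\
  ~ @vertex_minor _ _ (cycle_graph 7) (matched_cliques n).
Proof.
split; [exact: prism_not_vertex_minor_cycle | exact: cycle7_not_vertex_minor_matched_cliques].
Qed.
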